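(* Let $H$ be a fixed graph on $h$ vertices and let $G=(X\cup Y,E)$ be a simple $H$-minor-free bipartite graph with bipartition $(X,Y)$ such that no vertex of $Y$ is isolated. For $X'\subseteq X$ let $Y(X')=\{y\in Y: X'\subseteq N(y)\}$. If $|Y(X')|\le q$ for every $X'\subseteq X$ with $|X'|<h$, then $|Y|=O((q+h)\cdot|X|^h)$. *)

(* finite simple graphs as symmetric irreflexive relations on finTypes. *)
From mathcomp Require Import all_boot.
Set Implicit Arguments. Unset Strict Implicit. Unset Printing Implicit Defensive.

Definition induced_connected (V : finType) (e : rel V) (B : {set V}) : Prop :=
  forall x y, x \in B -> y \in B ->
    connect [rel a b | [&& e a b, a \in B & b \in B]] x y.

Definition is_minor (VH : finType) (eH : rel VH) (V : finType) (e : rel V) : Prop :=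
  exists f : VH -> {set V},
    [/\ forall v, f v != set0,
        forall u v, u != v -> [disjoint f u & f v],
        forall v, induced_connected e (f v) &
        forall u v, eH u v -> exists x y, [/\ x \in f u, y \in f v & e x y]].

Definition common_nbrs (V : finType) (e : rel V) (Y X' : {set V}) : {set V} :=
  [set y in Y | X' \subset [set x | e y x]].

(** A vertex [y] of [Y] has a neighbour [x], necessarily in [X], so [y] lies in
    [Y({x})]; hence [Y] is covered by the [|X|] sets [Y({x})], each of size at
    most [q] as soon as [H] has two vertices, giving [|Y| <= q |X|].  A graph
    [H] with at most one vertex is a minor of every nonempty graph, so the
    remaining case cannot occur when [Y] is nonempty. *)

From mathcomp Require Import all_boot.

Set Implicit Arguments. Unset Strict Implicit. Unset Printing Implicit Defensive.

Lemma leq_card_bigcup (I T : finType) (P : {pred I}) (F : I -> {set T}) :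
  #|\bigcup_(i | P i) F i| <= \sum_(i | P i) #|F i|.
Proof.
elim/big_ind2: _ => [|m A n B leAm leBn|//]; first by rewrite cards0.
by rewrite (leq_trans (leq_card_setU A B)) ?leq_add.
Qed.

Lemma is_minor_card_le1 (VH : finType) (eH : rel VH) (V : finType) (e : rel V)
    (v0 : V) :
  irreflexive eH -> #|VH| <= 1 -> is_minor eH e.
Proof.
move=> irrH VH_le1; have eqH := card_le1_eqP VH_le1.
exists (fun=> [set v0]); split.
- by move=> _; apply/set0Pn; exists v0; rewrite inE.
- by move=> u v; rewrite (eqH u v) ?eqxx.
- by move=> _ a b; rewrite !inE => /eqP-> /eqP->; apply: connect0.
- by move=> u v; rewrite (eqH u v) ?irrH.
Qed.

Section BipartiteCover.

Variables (V : finType) (e : rel V) (X Y : {set V}).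
Hypotheses (XIY : X :&: Y = set0) (XUY : X :|: Y = setT)
  (bip : forall x y, e x y -> (x \in X) = (y \in Y))
  (nonisolated : forall y, y \in Y -> exists x, e y x).

Lemma bipartite_nbr_in y x : y \in Y -> e y x -> x \in X.
Proof.
move=> yY /bip; have yNX : y \notin X.
  by apply: contra_eqN XIY => yX; apply/set0Pn; exists y; rewrite inE yX.
rewrite (negbTE yNX) => /esym xNY.
by have := in_setT x; rewrite -XUY inE xNY orbF.
Qed.

Lemma subset_bigcup_common_nbrs1 :
  Y \subset \bigcup_(x in X) common_nbrs e Y [set x].
Proof.
apply/subsetP => y yY; have [x eyx] := nonisolated yY.
apply/bigcupP; exists x; first exact: bipartite_nbr_in yY eyx.
by rewrite inE yY sub1set inE.
Qed.

Lemma card_le_common_nbrs1 q :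
  (forall x, x \in X -> #|common_nbrs e Y [set x]| <= q) -> #|Y| <= #|X| * q.
Proof.
move=> le_q; apply: leq_trans (subset_leq_card subset_bigcup_common_nbrs1) _.
apply: leq_trans (leq_card_bigcup _ _) _.
by rewrite -sum_nat_const leq_sum.
Qed.

End BipartiteCover.

Theorem lemma6p11 :
  forall (VH : finType) (eH : rel VH),
    symmetric eH -> irreflexive eH ->
  exists C : nat,
  forall (V : finType) (e : rel V) (X Y : {set V}) (q : nat),
    symmetric e -> irreflexive e ->
    X :&: Y = set0 -> X :|: Y = setT ->
    (forall x y, e x y -> (x \in X) = (y \in Y)) ->
    ~ is_minor eH e ->
    (forall y, y \in Y -> exists x, e y x) ->
    (forall X' : {set V}, X' \subset X -> #|X'| < #|VH| ->
        #|common_nbrs e Y X'| <= q) ->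
    #|Y| <= C * (q + #|VH|) * #|X| ^ #|VH|.
Proof.
move=> VH eH _ irrH; exists 1.
move=> V e X Y q _ _ XIY XUY bip noMinor nonisolated le_q.
have [->|[y0 _]] := set_0Vmem Y; first by rewrite cards0.
have VH_gt1 : 1 < #|VH|.
  by rewrite ltnNge; apply/negP => /(is_minor_card_le1 e y0 irrH).
have le_qX : #|Y| <= #|X| * q.
  apply: (card_le_common_nbrs1 XIY XUY bip nonisolated) => x xX.
  by apply: le_q; rewrite ?sub1set ?cards1.
apply: leq_trans le_qX _; rewrite mul1n mulnC leq_mul ?leq_addr //.
have [->|X_gt0] := posnP #|X|; first by [].
by rewrite -{1}[#|X|]expn1 leq_pexp2l // ltnW.
Qed.
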